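(* If $R$ is a Mori domain that is finitely stable, then $R$ is an LPI-domain with finite character.
   Context: Let $R$ be an integral domain with quotient field $K\neq R$. For a nonzero ideal $I$, $(R:I)=\{x\in K: xI\subseteq R\}$ and $I_v=(R:(R:I))$; $I$ is divisorial if $I=I_v$. $R$ is a Mori domain if it satisfies the ascending chain condition on divisorial integral ideals. An ideal $I$ is locally principal if $IR_M$ is principal for every maximal ideal $M$; invertible if $I(R:I)=R$. $R$ is an LPI-domain if every locally principal nonzero ideal is invertible. A nonzero ideal $I$ is stable if it is invertible as an ideal of $(I:I)=\{x\in K: xI\subseteq I\}$; $R$ is finitely stable if every nonzero finitely generated ideal is stable. $R$ has finite character if every nonzero element lies in only finitely many maximal ideals. *)

(* An integral domain R is represented as a subring S of a
   field K such that K is the quotient field of S.  Subsets of K are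
   predicates K -> Prop; set equality is extensional (<->). *)
From HB Require Import structures.
From mathcomp Require Import all_boot all_order all_algebra.
Set Implicit Arguments. Unset Strict Implicit. Unset Printing Implicit Defensive.
Import Order.TTheory GRing.Theory Num.Theory.
Local Open Scope ring_scope.

Section Defs.
Variable K : fieldType.
Implicit Types (S I J M T A B : K -> Prop).

Definition seteq A B := forall x, A x <-> B x.
Definition subset A B := forall x, A x -> B x.

Definition is_domain_in S :=
  [/\ S 0, S 1,
      (forall x y, S x -> S y -> S (x - y)),
      (forall x y, S x -> S y -> S (x * y)) &
      (forall x, exists a b, [/\ S a, S b, b != 0 & x = a / b])].
Definition proper_in S := exists x : K, ~ S x.

Definition dideal S I :=
  [/\ subset I S, I 0,
      (forall x y, I x -> I y -> I (x + y)) &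
      (forall r x, S r -> I x -> I (r * x))].
Definition nonzero I := exists x, I x /\ x != 0.

Definition colon A B : K -> Prop := fun x => forall y, B y -> A (x * y).
Definition vclos S I := colon S (colon S I).
Definition divisorial S I := seteq I (vclos S I).

Definition is_mori S :=
  forall Is : nat -> (K -> Prop),
    (forall n, dideal S (Is n) /\ nonzero (Is n) /\ divisorial S (Is n)) ->
    (forall n, subset (Is n) (Is n.+1)) ->
    exists n, forall m, (n <= m)%N -> seteq (Is m) (Is n).

Definition mulset A B : K -> Prop := fun x =>
  exists n (a b : nat -> K),
    (forall k, (k < n)%N -> A (a k) /\ B (b k)) /\
    x = \sum_(k < n) a k * b k.

Definition maximal_ideal S M :=
  [/\ dideal S M, ~ M 1 &
      forall J, dideal S J -> subset M J -> seteq J M \/ seteq J S].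

Definition loc S M : K -> Prop := fun x =>
  exists a s, [/\ S a, S s, ~ M s & x = a / s].
Definition ext_loc S M I : K -> Prop := fun x =>
  exists i s, [/\ I i, S s, ~ M s & x = i / s].

Definition locally_principal S I :=
  forall M, maximal_ideal S M ->
    exists g, seteq (ext_loc S M I) (fun x => exists r, loc S M r /\ x = g * r).

Definition invertible_in T I := seteq (mulset I (colon T I)) T.
Definition invertible S I := invertible_in S I.

Definition is_LPI S :=
  forall I, dideal S I -> nonzero I -> locally_principal S I -> invertible S I.

Definition stable I := invertible_in (colon I I) I.

Definition fin_gen S I :=
  exists n (g : nat -> K), (forall k, (k < n)%N -> S (g k)) /\
    seteq I (fun x => exists r : nat -> K,
               (forall k, (k < n)%N -> S (r k)) /\ x = \sum_(k < n) r k * g k).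

Definition finitely_stable S :=
  forall I, dideal S I -> nonzero I -> fin_gen S I -> stable I.

Definition finite_character S :=
  forall x, S x -> x != 0 ->
    exists n (Ms : nat -> (K -> Prop)),
      forall M, maximal_ideal S M -> M x ->
        exists k, (k < n)%N /\ seteq M (Ms k).
End Defs.

(* The Mori hypothesis is used only through one consequence: there is no
   infinite strictly ascending chain in a class of nonzero divisorial
   ideals that is closed under strict enlargement.  From this we get
   (1) every nonzero ideal A contains a finitely generated J with
       (S : J) = (S : A), i.e. J_v = A_v;
   (2) combined with finite stability, a proper nonzero ideal has a proper
       v-closure; hence every proper nonzero ideal lies in a maximal ideal
       and nonzero maximal ideals are divisorial.
   LPI: if I is locally principal and I(S:I) lies in a maximal P, write
   I R_P = i R_P and take a finitely generated J <= I with J_v = I_v; a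
   common denominator t outside P of the fractions j/i (j generating J)
   gives t/i in (S:J) = (S:I), whence t in I(S:I) <= P, a contradiction.
   Finite character: if x lies in infinitely many maximal ideals M_0, M_1,
   ..., the divisorial ideals (xS : M_0 ∩ ... ∩ M_n) ascend, so they
   stabilize; this forces M_0 ∩ ... ∩ M_N <= M_(N+1), contradicting
   prime avoidance for distinct maximal ideals. *)
From HB Require Import structures.
From mathcomp Require Import all_boot all_order all_algebra ring.
From Stdlib Require Import Classical ClassicalEpsilon.
Set Implicit Arguments. Unset Strict Implicit. Unset Printing Implicit Defensive.
Import GRing.Theory.
Local Open Scope ring_scope.
Set Bullet Behavior "Strict Subproofs".

Lemma avoiding_sequence (T : Type) (y0 : T) (P : T -> Prop) (E : T -> T -> Prop) :
  (forall n (f : nat -> T), exists y, P y /\ forall k, (k < n)%N -> ~ E y (f k)) ->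
  exists s : nat -> T, forall n, P (s n) /\ forall k, (k < n)%N -> ~ E (s n) (s k).
Proof.
move=> avoid.
pose next n f := proj1_sig (constructive_indefinite_description _ (avoid n f)).
have nextP n f : P (next n f) /\ forall k, (k < n)%N -> ~ E (next n f) (f k).
  by rewrite /next; case: constructive_indefinite_description.
(* prefix n lists the first n terms, padded with y0. *)
pose prefix := nat_rect (fun _ => nat -> T) (fun _ => y0)
  (fun n f k => if k == n then next n f else f k).
exists (fun n => next n (prefix n)) => n.
have prefixE m k : (k < m)%N -> prefix m k = next k (prefix k).
  elim: m => [|m IH] //= hk; case: eqP => [-> // | nkm]; apply: IH.
  by rewrite ltn_neqAle; apply/andP; split; [apply/eqP | rewrite -ltnS].
have [Pn avoidn] := nextP n (prefix n); split=> // k hk.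
by rewrite -(prefixE n k hk); apply: avoidn.
Qed.

Section Domain.
Variables (K : fieldType) (S : K -> Prop).
Hypothesis domS : is_domain_in S.

Lemma dom0 : S 0. Proof. by case: domS. Qed.
Lemma dom1 : S 1. Proof. by case: domS. Qed.
Lemma domM x y : S x -> S y -> S (x * y).
Proof. by case: domS => _ _ _ Smul _; apply: Smul. Qed.

Lemma domD x y : S x -> S y -> S (x + y).
Proof.
case: domS => _ _ domB _ _ Sx Sy; rewrite -[y]opprK -[- y]sub0r.
by apply: (domB) => //; apply: (domB) => //; apply: dom0.
Qed.

Lemma dom_sum n (F : 'I_n -> K) : (forall k, S (F k)) -> S (\sum_(k < n) F k).
Proof. by move=> SF; apply: (big_ind S) => //; [apply: dom0 | apply: domD]. Qed.

Lemma dideal_S : dideal S S.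
Proof. by split=> //; [apply: dom0 | apply: domD | apply: domM]. Qed.

Lemma dideal_unit J : dideal S J -> J 1 -> seteq J S.
Proof.
case=> JS _ _ Jmul J1 z; split; first exact: JS.
by move=> Sz; rewrite -[z]mulr1; apply: Jmul.
Qed.

Lemma dideal_sum I n (F : 'I_n -> K) :
  dideal S I -> (forall k, I (F k)) -> I (\sum_(k < n) F k).
Proof. by case=> _ I0 Iadd _ IF; apply: (big_ind I). Qed.

Lemma colon_anti (A B B' : K -> Prop) :
  subset B B' -> subset (colon A B') (colon A B).
Proof. by move=> BB' x hx y /BB'; apply: hx. Qed.

Lemma sub_vclos I : subset I (vclos S I).
Proof. by move=> x Ix u hu; rewrite mulrC; apply: hu. Qed.

Lemma vclos_mono I J : subset I J -> subset (vclos S I) (vclos S J).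
Proof. by move=> IJ; do 2 apply: colon_anti. Qed.

Lemma vclos_divisorial I : divisorial S (vclos S I).
Proof.
move=> x; split; first exact: sub_vclos.
by move=> hx u hu; apply: hx => z hz; rewrite mulrC; apply: hz.
Qed.

Lemma vclos_nonzero I : nonzero I -> nonzero (vclos S I).
Proof. by case=> x [Ix nx]; exists x; split=> //; apply: sub_vclos. Qed.

Lemma vclos_dideal I : subset I S -> dideal S (vclos S I).
Proof.
move=> IS; split.
- by move=> x hx; rewrite -[x]mulr1; apply: hx => y /IS; rewrite mul1r.
- by move=> y _; rewrite mul0r; apply: dom0.
- by move=> x y hx hy z hz; rewrite mulrDl; apply: domD; [apply: hx | apply: hy].
- by move=> r x Sr hx z hz; rewrite -mulrA; apply: domM => //; apply: hx.
Qed.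

Definition gen n (g : nat -> K) : K -> Prop := fun x =>
  exists r : nat -> K, (forall k, (k < n)%N -> S (r k)) /\ x = \sum_(k < n) r k * g k.

Definition snoc (g : nat -> K) n (y : K) : nat -> K :=
  fun k => if (k < n)%N then g k else y.

Lemma snoc_in (A : K -> Prop) n g y : (forall k, (k < n)%N -> A (g k)) -> A y ->
  forall k, (k < n.+1)%N -> A (snoc g n y k).
Proof. by move=> Ag Ay k _; rewrite /snoc; case: ifP => // /Ag. Qed.

Lemma gen_sub I n g : dideal S I ->
  (forall k, (k < n)%N -> I (g k)) -> subset (gen n g) I.
Proof.
move=> DI Ig x [r [Sr ->]]; apply: (dideal_sum DI) => k.
by case: DI => _ _ _ Imul; apply: Imul; [apply: Sr | apply: Ig].
Qed.

Lemma gen_dideal n g : (forall k, (k < n)%N -> S (g k)) -> dideal S (gen n g).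
Proof.
move=> Sg; split.
- exact: gen_sub dideal_S Sg.
- exists (fun _ => 0); split=> [k _|]; first exact: dom0.
  by rewrite big1 // => k _; rewrite mul0r.
- move=> x y [r [Sr ->]] [r' [Sr' ->]]; exists (fun k => r k + r' k); split.
    by move=> k hk; apply: domD; [apply: Sr | apply: Sr'].
  by rewrite -big_split /=; apply: eq_bigr => k _; rewrite mulrDl.
- move=> s x Ss [r [Sr ->]]; exists (fun k => s * r k); split.
    by move=> k hk; apply: domM => //; apply: Sr.
  by rewrite mulr_sumr; apply: eq_bigr => k _; rewrite mulrA.
Qed.

Lemma gen_snoc_mono n g y : subset (gen n g) (gen n.+1 (snoc g n y)).
Proof.
move=> x [r [Sr ->]]; exists (snoc r n 0); split.
  by apply: snoc_in => //; apply: dom0.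
rewrite big_ord_recr /= /snoc ltnn mul0r addr0.
by apply: eq_bigr => k _; rewrite /= ltn_ord.
Qed.

Lemma gen_snoc_last n g y : gen n.+1 (snoc g n y) y.
Proof.
exists (fun k => if k == n then 1 else 0); split.
  by move=> k _; case: ifP => _; [apply: dom1 | apply: dom0].
rewrite big_ord_recr /= eqxx mul1r /snoc ltnn big1 ?add0r // => k _.
by rewrite /= ltn_eqF ?mul0r.
Qed.

Lemma colon_gen n g u : (forall k, (k < n)%N -> S (u * g k)) -> colon S (gen n g) u.
Proof.
move=> Sug z [r [Sr ->]]; rewrite mulr_sumr; apply: dom_sum => k.
by rewrite mulrCA; apply: domM; [apply: Sr | apply: Sug].
Qed.

(* Write 1 = sum a_k b_k with a_k in J and b_k in
   ((J : J) : J); each b_k lies in (S : J) <= S, so 1 is in J. *)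
Lemma fstable_unit n g : finitely_stable S -> (forall k, (k < n)%N -> S (g k)) ->
  nonzero (gen n g) -> subset (colon S (gen n g)) S -> gen n g 1.
Proof.
move=> FS Sg nzJ colonS; have DJ := gen_dideal Sg; have [JS _ _ Jmul] := DJ.
have fgJ : fin_gen S (gen n g) by exists n, g.
have JJ1 : colon (gen n g) (gen n g) 1 by move=> y Jy; rewrite mul1r.
have [m [a [b [hab ->]]]] := proj2 (FS _ DJ nzJ fgJ 1) JJ1.
apply: (dideal_sum DJ) => k; have [Ja Tb] := hab k (ltn_ord k).
rewrite mulrC; apply: Jmul => //; apply: (colonS) => y Jy.
by apply: (colonS) => z Jz; apply: JS; apply: Tb.
Qed.

(* Maximal ideals are prime: if ab is in M and a is not, then M + Sa = S
   gives 1 = m + ra, so b = bm + r(ab) is in M. *)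
Lemma maximal_prime M a b : maximal_ideal S M ->
  S a -> S b -> M (a * b) -> ~ M a -> M b.
Proof.
move=> [[MS M0 Madd Mmul] _ Mmax] Sa Sb Mab nMa.
pose J z := exists m r, [/\ M m, S r & z = m + r * a].
have DJ : dideal S J.
{ split.
  - by move=> z [m [r [Mm Sr ->]]]; apply: domD; [apply: MS | apply: domM].
  - by exists 0, 0; split=> //; [apply: dom0 | rewrite mul0r addr0].
  - move=> x y [m [r [Mm Sr ->]]] [m' [r' [Mm' Sr' ->]]].
    exists (m + m'), (r + r'); split; [exact: Madd | exact: domD |].
    by rewrite mulrDl addrACA.
  - move=> s x Ss [m [r [Mm Sr ->]]]; exists (s * m), (s * r); split.
    + exact: Mmul.
    + exact: domM.
    + by rewrite mulrDr mulrA. }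
have MJ : subset M J.
  by move=> z Mz; exists z, 0; split=> //; [apply: dom0 | rewrite mul0r addr0].
case: (Mmax J DJ MJ) => [JM | JS].
- by case: nMa; apply/JM; exists 0, 1; split=> //; [apply: dom1 | rewrite mul1r add0r].
- have [m [r [Mm Sr e1]]] := proj2 (JS 1) dom1.
  have -> : b = b * m + r * (a * b) by rewrite -[b in LHS]mul1r e1; ring.
  by apply: Madd; apply: Mmul.
Qed.

Lemma notin_maximal_mul M a b : maximal_ideal S M ->
  S a -> S b -> ~ M a -> ~ M b -> ~ M (a * b).
Proof. by move=> mM Sa Sb nMa nMb /(maximal_prime mM Sa Sb) => /(_ nMa). Qed.

Lemma maximal_not_sub M Q : maximal_ideal S M -> maximal_ideal S Q ->
  ~ seteq Q M -> exists a, M a /\ ~ Q a.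
Proof.
move=> [_ _ Mmax] [DQ nQ1 _] nQM; apply: NNPP => noa.
have MQ : subset M Q by move=> z Mz; apply: NNPP => nQz; apply: noa; exists z.
by case: (Mmax Q DQ MQ) => // QS; apply: nQ1; apply/QS; apply: dom1.
Qed.

Lemma maximal_avoidance Q m (Ms : nat -> K -> Prop) : maximal_ideal S Q ->
  (forall k, (k < m)%N -> maximal_ideal S (Ms k) /\ ~ seteq Q (Ms k)) ->
  exists t, [/\ S t, ~ Q t & forall k, (k < m)%N -> Ms k t].
Proof.
move=> mQ; have [_ nQ1 _] := mQ.
elim: m => [|m IH] hMs; first by exists 1; split=> //; apply: dom1.
have [t [St nQt Mst]] := IH (fun k hk => hMs k (ltnW hk)).
have [mM nQM] := hMs m (ltnSn m); have [[MS _ _ Mmul] _ _] := mM.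
have [a [Ma nQa]] := maximal_not_sub mM mQ nQM.
have Sa := MS a Ma.
exists (t * a); split; [exact: domM | exact: notin_maximal_mul mQ St Sa nQt nQa |].
move=> k; rewrite ltnS leq_eqVlt => /orP [/eqP -> | hk]; first exact: Mmul.
have [[[_ _ _ Mkmul] _ _] _] := hMs k (ltnW hk).
by rewrite mulrC; apply: Mkmul => //; apply: Mst.
Qed.

Lemma nonmaximal_enlarge D : dideal S D -> ~ D 1 -> ~ maximal_ideal S D ->
  exists J, [/\ dideal S J, subset D J, ~ J 1 & exists z, J z /\ ~ D z].
Proof.
move=> DD nD1 nmax; apply: NNPP => noJ; apply: nmax; split=> // J DJ DJsub.
case: (classic (J 1)) => [J1 | nJ1]; first by right; apply: dideal_unit.
left=> z; split; last exact: DJsub.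
by move=> Jz; apply: NNPP => nDz; apply: noJ; exists J; split=> //; exists z.
Qed.

Section MoriFinitelyStable.
Hypothesis moriS : is_mori S.
Hypothesis fstabS : finitely_stable S.

(* The form in which the Mori property is used: a class of nonzero
   divisorial ideals in which every member lies strictly inside another
   member is empty, since otherwise it contains an infinite strict chain. *)
Lemma mori_no_strict_ascent (Q : (K -> Prop) -> Prop) :
  (forall D, Q D -> [/\ dideal S D, nonzero D & divisorial S D]) ->
  (forall D, Q D -> exists D', [/\ Q D', subset D D' & ~ subset D' D]) ->
  forall D, ~ Q D.
Proof.
move=> QD Qgrow D0 QD0.
have next D : exists D', Q D -> [/\ Q D', subset D D' & ~ subset D' D].
  case: (classic (Q D)) => [/Qgrow [D' hD'] | nQD]; first by exists D'.
  by exists D.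
pose f D := proj1_sig (constructive_indefinite_description _ (next D)).
have fP D : Q D -> [/\ Q (f D), subset D (f D) & ~ subset (f D) D].
  by rewrite /f; case: constructive_indefinite_description.
pose chain n := iter n f D0.
have Qchain n : Q (chain n) by elim: n => [|n IH] //=; case: (fP _ IH).
have [n stable] := moriS (fun n => let: And3 DD nzD dD := QD _ (Qchain n) in
  conj DD (conj nzD dD)) (fun n => let: And3 _ sub _ := fP _ (Qchain n) in sub).
have [_ _ nsub] := fP _ (Qchain n); apply: nsub => x.
exact: (proj1 (stable n.+1 (leqnSn n) x)).
Qed.

(* Every nonzero ideal A contains a finitely generated nonzero ideal J with
   (S : J) = (S : A): otherwise the v-closures of the finitely generated
   subideals of A would ascend strictly forever. *)
Lemma mori_fg_subideal A : dideal S A -> nonzero A ->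
  exists n g, [/\ forall k, (k < n)%N -> A (g k), nonzero (gen n g) &
    subset (colon S (gen n g)) (colon S A)].
Proof.
move=> DA [x [Ax nx]]; have [AS _ _ _] := DA; apply: NNPP => noJ.
pose Q D := exists n g, [/\ forall k, (k < n)%N -> A (g k), nonzero (gen n g)
  & D = vclos S (gen n g)].
apply: (@mori_no_strict_ascent Q _ _ (vclos S (gen 1 (snoc (fun _ => x) 0 x)))).
- move=> _ [n [g [Ag nzJ ->]]]; split; [|exact: vclos_nonzero|exact: vclos_divisorial].
  by apply/vclos_dideal/(gen_sub dideal_S) => k /Ag /AS.
- move=> _ [n [g [Ag nzJ ->]]].
  have [u [y [uJ Ay nSuy]]] : exists u y, [/\ colon S (gen n g) u, A y & ~ S (u * y)].
    apply: NNPP => hn; apply: noJ; exists n, g; split=> // u uJ y Ay.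
    by apply: NNPP => nS; apply: hn; exists u, y.
  exists (vclos S (gen n.+1 (snoc g n y))); split.
  + exists n.+1, (snoc g n y); split=> //; first exact: snoc_in.
    by case: nzJ => z [Jz nz]; exists z; split=> //; apply: gen_snoc_mono.
  + by apply/vclos_mono/gen_snoc_mono.
  + move=> sub; apply: nSuy; rewrite mulrC.
    by apply: (sub y); [apply/sub_vclos/gen_snoc_last | exact: uJ].
- exists 1%N, (snoc (fun _ => x) 0 x); split=> //.
  by exists x; split=> //; apply: gen_snoc_last.
Qed.

(* A proper nonzero ideal B has a proper v-closure: take J <= B finitely
   generated with (S : J) = (S : B); if 1 were in B_v then (S : J) <= S and
   finite stability would make J, hence B, the unit ideal. *)
Lemma vclos_proper B : dideal S B -> nonzero B -> ~ B 1 -> ~ vclos S B 1.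
Proof.
move=> DB nzB nB1 B1v; apply: nB1.
have [n [g [Bg nzJ colonJ]]] := mori_fg_subideal DB nzB.
have [BS _ _ _] := DB.
apply: (gen_sub DB Bg); apply: fstable_unit => //; first by move=> k /Bg /BS.
by move=> u /colonJ /B1v; rewrite mul1r.
Qed.

(* Every proper nonzero ideal lies in a maximal ideal: the proper nonzero
   divisorial ideals containing A cannot all be non-maximal, since a
   non-maximal one strictly enlarges to a proper ideal whose v-closure is
   again proper. *)
Lemma in_maximal A : dideal S A -> nonzero A -> ~ A 1 ->
  exists P, maximal_ideal S P /\ subset A P.
Proof.
move=> DA nzA nA1; have [AS _ _ _] := DA; apply: NNPP => noP.
pose Q D := [/\ dideal S D, nonzero D, divisorial S D, ~ D 1 & subset A D].
apply: (@mori_no_strict_ascent Q _ _ (vclos S A)).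
- by move=> D [].
- move=> D [DD nzD dD nD1 AD].
  have [|J [DJ DJsub nJ1 [z [Jz nDz]]]] := nonmaximal_enlarge DD nD1.
    by move=> mD; apply: noP; exists D.
  have [JS _ _ _] := DJ; have nzJ : nonzero J.
    by case: nzD => w [Dw nw]; exists w; split=> //; apply: DJsub.
  exists (vclos S J); split.
  + split; [exact: vclos_dideal | exact: vclos_nonzero | exact: vclos_divisorial |
      exact: vclos_proper | by move=> w /AD /DJsub /sub_vclos].
  + by move=> w /DJsub /sub_vclos.
  + by move=> sub; apply: nDz; apply: sub; apply: sub_vclos.
- split; [exact: vclos_dideal | exact: vclos_nonzero | exact: vclos_divisorial |
    exact: vclos_proper | exact: sub_vclos].
Qed.

(* Nonzero maximal ideals are divisorial, since their v-closure is proper. *)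
Lemma maximal_divisorial P : maximal_ideal S P -> nonzero P -> divisorial S P.
Proof.
move=> [DP nP1 Pmax] nzP; have [PS _ _ _] := DP.
case: (Pmax _ (vclos_dideal PS) (@sub_vclos P)) => [Pv | PvS].
- by move=> x; split; [apply: sub_vclos | apply: (proj1 (Pv x))].
- by case: (vclos_proper DP nzP nP1); apply/PvS; apply: dom1.
Qed.

Lemma mulset_mem (A B : K -> Prop) a b : A a -> B b -> mulset A B (a * b).
Proof. by move=> Aa Bb; exists 1%N, (fun _ => a), (fun _ => b); rewrite big_ord1. Qed.

Lemma mulset_inverse_dideal I : dideal S I -> dideal S (mulset I (colon S I)).
Proof.
move=> DI; have [_ _ _ Imul] := DI; split.
- move=> x [n [a [b [hab ->]]]]; apply: dom_sum => k.
  by have [Ia Cb] := hab k (ltn_ord k); rewrite mulrC; apply: Cb.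
- by exists 0%N, (fun _ => 0), (fun _ => 0); rewrite big_ord0.
- move=> x y [n [a [b [hab ->]]]] [m [a' [b' [hab' ->]]]].
  exists (n + m)%N, (fun k => if (k < n)%N then a k else a' (k - n)%N),
    (fun k => if (k < n)%N then b k else b' (k - n)%N); split.
  + move=> k hk; case: ifP => hkn; first exact: hab.
    by apply: hab'; rewrite ltn_subLR // leqNgt hkn.
  + rewrite big_split_ord /=; congr (_ + _); apply: eq_bigr => k _ /=.
    * by rewrite ltn_ord.
    * by rewrite ltnNge leq_addr /= addKn.
- move=> r x Sr [n [a [b [hab ->]]]]; exists n, (fun k => r * a k), b; split.
  + by move=> k hk; have [Ia Cb] := hab k hk; split=> //; apply: Imul.
  + by rewrite mulr_sumr; apply: eq_bigr => k _; rewrite mulrA.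
Qed.

Lemma locally_principal_at P I g : maximal_ideal S P -> nonzero I ->
  seteq (ext_loc S P I) (fun x => exists r, loc S P r /\ x = g * r) ->
  exists i, [/\ I i, i != 0 & forall h, I h -> loc S P (h / i)].
Proof.
move=> mP [x [Ix nx]] IPg; have [[_ P0 _ _] nP1 _] := mP.
have ext1 h : I h -> ext_loc S P I h.
  by move=> Ih; exists h, 1; split=> //; [apply: dom1 | rewrite divr1].
have [r [_ xgr]] := proj1 (IPg x) (ext1 x Ix).
have gn0 : g != 0 by apply: contraNneq nx => g0; rewrite xgr g0 mul0r.
have [i [s [Ii Ss nPs gis]]] : ext_loc S P I g.
  apply/IPg; exists 1; split; last by rewrite mulr1.
  by exists 1, 1; split=> //; [apply: dom1 | apply: dom1 | rewrite divr1].
have sn0 : s != 0 by apply: contraPneq nPs => ->.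
have in0 : i != 0 by apply: contraNneq gn0 => i0; rewrite gis i0 mul0r.
exists i; split=> // h Ih.
have [_ [[a [s' [Sa Ss' nPs' ->]]] hgr]] := proj1 (IPg h) (ext1 h Ih).
have s'n0 : s' != 0 by apply: contraPneq nPs' => ->.
exists a, (s * s'); split=> //; first exact: domM.
- exact: notin_maximal_mul mP Ss Ss' nPs nPs'.
- by rewrite hgr gis; field; rewrite in0 sn0 s'n0.
Qed.

Lemma loc_common_denominator P n (x : nat -> K) : maximal_ideal S P ->
  (forall k, (k < n)%N -> loc S P (x k)) ->
  exists t, [/\ S t, ~ P t & forall k, (k < n)%N -> S (t * x k)].
Proof.
move=> mP; have [[_ P0 _ _] nP1 _] := mP.
elim: n => [|n IH] locx; first by exists 1; split=> //; apply: dom1.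
have [t [St nPt Stx]] := IH (fun k hk => locx k (ltnW hk)).
have [a [s [Sa Ss nPs xn]]] := locx n (ltnSn n).
have sn0 : s != 0 by apply: contraPneq nPs => ->.
exists (t * s); split; [exact: domM | exact: notin_maximal_mul mP St Ss nPt nPs |].
move=> k; rewrite ltnS leq_eqVlt => /orP [/eqP -> | hk].
- have -> : t * s * x n = t * a by rewrite xn; field.
  exact: domM.
- by rewrite mulrAC; apply: domM => //; apply: Stx.
Qed.

(* LPI: if I is locally principal but I (S : I) is proper, it lies in a
   maximal P with I R_P = i R_P.  For a finitely generated J <= I with
   (S : J) = (S : I), a common denominator t outside P of the h/i (h
   generating J) gives t/i in (S : J) = (S : I), so t = i (t/i) is in
   I (S : I) <= P, which is absurd. *)
Lemma mori_fstable_LPI : is_LPI S.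
Proof.
move=> I DI nzI lpI; have DA := mulset_inverse_dideal DI.
suff A1 : mulset I (colon S I) 1 by apply: dideal_unit.
apply: NNPP => nA1; have [IS _ _ _] := DI.
have nzA : nonzero (mulset I (colon S I)).
  have [x [Ix nx]] := nzI; exists x; split=> //.
  rewrite -[x]mulr1; apply: mulset_mem => //.
  by move=> y /IS; rewrite mul1r.
have [P [mP AP]] := in_maximal DA nzA nA1.
have [g IPg] := lpI P mP.
have [i [Ii ni loci]] := locally_principal_at mP nzI IPg.
have [n [h [Ih _ colonJ]]] := mori_fg_subideal DI nzI.
have [t [St nPt Sth]] :=
  loc_common_denominator (x := fun k => h k / i) mP (fun k hk => loci _ (Ih k hk)).
apply: nPt; apply: AP; have -> : t = i * (t / i) by rewrite mulrC divfK.
apply: mulset_mem => //.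
apply: colonJ; apply: colon_gen => k hk.
by rewrite mulrAC -mulrA; apply: Sth.
Qed.

Definition principal (x : K) : K -> Prop := fun v => exists w, S w /\ v = x * w.

Lemma colon_principal_ideal x D : x != 0 -> subset D S -> D x ->
  let E := colon (principal x) D in [/\ dideal S E, nonzero E & divisorial S E].
Proof.
move=> nx DS Dx E; have Ex : E x by move=> y Dy; exists y; split=> //; apply: DS.
split; last 1 first.
- move=> z; split; first exact: sub_vclos.
  move=> zv y Dy; have yxE : colon S E (y / x).
    move=> e Ee; have [w [Sw ew]] := Ee y Dy.
    by have -> : y / x * e = w by apply: (mulfI nx); rewrite -ew; field.
  by exists (z * (y / x)); split; [apply: zv | field].
- split.
  + move=> z Ez; have [w [Sw ew]] := Ez x Dx.
    by rewrite (mulfI nx (etrans (mulrC x z) ew)).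
  + by move=> y _; exists 0; split; [apply: dom0 | rewrite mul0r mulr0].
  + move=> a b Ea Eb y Dy; have [w [Sw ew]] := Ea y Dy; have [w' [Sw' ew']] := Eb y Dy.
    by exists (w + w'); split; [apply: domD | rewrite mulrDl ew ew' mulrDr].
  + move=> r a Sr Ea y Dy; have [w [Sw ew]] := Ea y Dy.
    by exists (r * w); split; [apply: domM | rewrite -mulrA ew mulrCA].
- by exists x.
Qed.

Lemma colon_principal_vclos x D D' : x != 0 ->
  subset (colon (principal x) D') (colon (principal x) D) -> subset D (vclos S D').
Proof.
move=> nx sub d Dd u uD'.
have xuE : colon (principal x) D' (x * u).
  by move=> y D'y; exists (u * y); split; [apply: uD' | rewrite mulrA].
have [w [Sw ew]] := sub _ xuE d Dd.
by rewrite mulrC (mulfI nx (etrans (mulrA _ _ _) ew)).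
Qed.

(* Finite character: if x lay in infinitely many maximal ideals M_0, M_1,
   ..., the divisorial ideals (xS : M_0 ∩ ... ∩ M_n) would ascend, hence
   stabilize at some N; then M_0 ∩ ... ∩ M_N <= (M_0 ∩ ... ∩ M_(N+1))_v
   <= (M_(N+1))_v = M_(N+1), contradicting prime avoidance. *)
Lemma mori_fstable_finite_character : finite_character S.
Proof.
move=> x Sx nx; apply: NNPP => nocover.
have [Ms hMs] : exists Ms : nat -> K -> Prop, forall n,
    (maximal_ideal S (Ms n) /\ Ms n x) /\ forall k, (k < n)%N -> ~ seteq (Ms n) (Ms k).
  apply: (avoiding_sequence S (P := fun M => maximal_ideal S M /\ M x) (E := @seteq K)).
  move=> n f; apply: NNPP => noM.
  apply: nocover; exists n, f => M mM Mx; apply: NNPP => nk; apply: noM.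
  by exists M; split=> // k hk eqM; apply: nk; exists k.
pose D n z := forall k, (k < n.+1)%N -> Ms k z.
have DS n : subset (D n) S.
  by have [[[[MS _ _ _] _ _] _] _] := hMs 0%N => z /(_ 0%N isT) /MS.
have Dx n : D n x by move=> k _; case: (hMs k) => [[]].
have [N stable] := @moriS (fun n => colon (principal x) (D n))
  (fun n => let: And3 DE nzE dE := colon_principal_ideal nx (DS n) (Dx n) in
     conj DE (conj nzE dE))
  (fun n => colon_anti (fun z Dz k hk => Dz k (ltnW hk))).
have [[mQ Qx] QMs] := hMs N.+1.
have DQ : subset (D N) (Ms N.+1).
  move=> d /(colon_principal_vclos nx (fun z => proj1 (stable N.+1 (leqnSn N) z))) dv.
  apply/(maximal_divisorial mQ); first by exists x.
  by apply: vclos_mono dv => z; apply.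
have [t [_ nQt Dt]] := maximal_avoidance (m := N.+1) mQ
  (fun k hk => conj (proj1 (proj1 (hMs k))) (QMs k hk)).
by apply: nQt; apply: DQ.
Qed.

End MoriFinitelyStable.
End Domain.

Theorem mainTheorem6 (K : fieldType) (S : K -> Prop) :
  is_domain_in S -> proper_in S ->
  is_mori S -> finitely_stable S ->
  is_LPI S /\ finite_character S.
Proof.
move=> domS _ moriS fstabS; split.
- exact: mori_fstable_LPI.
- exact: mori_fstable_finite_character.
Qed.
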